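(* Let $G$ be a graph, $\mathcal U=\{U_1,\dots,U_m\}$ a partition of $V(G)$, and $\mathcal C$ a $\mathcal U$-connecting path system in $G$. Then there exists a $\mathcal U$-connecting path system $\mathcal C'$ in $G$ such that (a) $\mathcal C'$ contains no edge with both ends in the same $U_i$, and (b) for all $1\leq i<j\leq m$, $\mathcal C'$ contains at most $2$ edges with one end in $U_i$ and the other in $U_j$.
   Context: A path system in $G$ is a collection of vertex-disjoint (non-trivial) paths in $G$, also viewed as the subgraph formed by their union. Given a partition $\mathcal U$ of $V(G)$ and a path system $\mathcal P$, the reduced multigraph $R_{\mathcal U}(\mathcal P)$ has vertex set $\mathcal U$ and, for each path of $\mathcal P$ with endpoints in $U\in\mathcal U$ and $U'\in\mathcal U$, one edge between $U$ and $U'$ (a loop if $U=U'$; loops contribute 2 to the degree). $\mathcal P$ is $\mathcal U$-connecting if $R_{\mathcal U}(\mathcal P)$ is Eulerian, i.e. connected (on all of $\mathcal U$) with every vertex of even degree. *)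

From mathcomp Require Import all_boot.
Set Implicit Arguments. Unset Strict Implicit. Unset Printing Implicit Defensive.

(* A finite simple graph: vertex type T : finType, adjacency e : rel T,
   assumed symmetric and irreflexive (hypotheses of the theorem).
   A path is a nonempty vertex sequence x :: q with consecutive vertices
   adjacent and no repeated vertex; it is non-trivial iff q <> [::]. *)

Section PathSystems.
Variable T : finType.
Variable e : rel T.

Definition is_ntpath (p : seq T) : bool :=
  if p is x :: q then [&& 0 < size q, path e x q & uniq p] else false.

Definition path_system (C : seq (seq T)) : bool :=
  all is_ntpath C && uniq (flatten C).

(* Number of endpoints of p lying in B (a path from B to B counts 2). *)
Definition ends_in (B : {set T}) (p : seq T) : nat :=
  if p is x :: q then (x \in B) + (last x q \in B) else 0.

(* Edge of the reduced multigraph R_U(C) between blocks A and B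
   (some path has one endpoint in A and the other in B). *)
Definition red_adj (P : {set {set T}}) (C : seq (seq T)) : rel {set T} :=
  fun A B => [&& A \in P, B \in P &
    has (fun p => if p is x :: q then
                    ((x \in A) && (last x q \in B)) || ((x \in B) && (last x q \in A))
                  else false) C].

Definition connecting (P : {set {set T}}) (C : seq (seq T)) : Prop :=
  (forall A B, A \in P -> B \in P -> connect (red_adj P C) A B) /\
  (forall B, B \in P -> ~~ odd (\sum_(p <- C) ends_in B p)).

Definition path_edges (p : seq T) : seq (T * T) := zip p (behead p).

Definition n_edges_between (C : seq (seq T)) (A B : {set T}) : nat :=
  \sum_(p <- C) count (fun xy : T * T =>
      ((xy.1 \in A) && (xy.2 \in B)) || ((xy.1 \in B) && (xy.2 \in A)))
    (path_edges p).

End PathSystems.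

From mathcomp Require Import all_boot.
From mathcomp Require Import zify.
From Stdlib Require Import Classical Lia.
Set Implicit Arguments. Unset Strict Implicit. Unset Printing Implicit Defensive.

(* We delete edges while keeping the system connecting; the number of edges
   drops each time, so we end with a system where no such deletion is
   available, and it satisfies both conditions.  Deleting a list F of edges
   ([cut F C]) splits every path at those edges and drops single vertices.

   Connectivity and parity of the reduced multigraph are read off saturated
   sets S (unions of blocks): R(C) is connected iff every nonempty proper
   saturated S is crossed by a path with exactly one endpoint in S, all
   blocks have even degree iff every saturated S does, and the degree of S
   has the parity of the number of paths crossing S.
   - An edge inside a block has both ends on the same side of every
     saturated set, so deleting it changes no crossing and no parity.
   - Given three edges f1, f2, f3 between blocks A and B, deleting any two
     keeps all parities.  If each pair disconnects R, then for each fi some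
     saturated S_i containing A but not B is crossed by a single path g_i of
     L = cut [:: f1; f2; f3] C, a piece created at fi.  Deleting three A-B
     edges makes every such set odd in L, while two distinct g_i touching
     the same block among A, B would make a meet of the S_i (or of their
     complements) even; a case analysis on g1, g2, g3 concludes. *)

Lemma even_sum (I : Type) (r : seq I) (P : pred I) (G : I -> nat) :
  (forall i, P i -> ~~ odd (G i)) -> ~~ odd (\sum_(i <- r | P i) G i).
Proof.
move=> evenG; apply: (big_ind (fun n => ~~ odd n)) => // m n.
by rewrite oddD => /negbTE-> /negbTE->.
Qed.

Lemma uniq_map_eq (U V : eqType) (m : U -> V) (s : seq U) (x y : U) :
  uniq (map m s) -> x \in s -> y \in s -> m x = m y -> x = y.
Proof.
elim: s => //= a s IH /andP[ma um]; rewrite !in_cons.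
case/orP=> [/eqP->|xs]; case/orP=> [/eqP->|ys] // mxy; last exact: IH.
  by rewrite mxy map_f in ma.
by rewrite -mxy map_f in ma.
Qed.

Section Splitting.
Variable T : finType.
Implicit Types (D : pred (T * T)) (S : {set T}).

(* [split_at D x s]: the maximal subpaths of x :: s that use no edge of D,
   listed in order; cutting a path at k edges of D yields k + 1 pieces. *)
Fixpoint split_at D (x : T) (s : seq T) : seq (seq T) :=
  if s is y :: s' then
    let r := split_at D y s' in
    if D (x, y) then [:: x] :: r else (x :: head [::] r) :: behead r
  else [:: [:: x]].

Definition pieces D (p : seq T) : seq (seq T) :=
  if p is x :: s then split_at D x s else [::].

Lemma split_at_cons D x y s : split_at D x (y :: s) =
  if D (x, y) then [:: x] :: split_at D y s
  else (x :: head [::] (split_at D y s)) :: behead (split_at D y s).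
Proof. by []. Qed.

Lemma split_at_head D x s : exists h r, split_at D x s = (x :: h) :: r.
Proof.
elim: s x => [|y s IH] x /=; first by exists [::], [::].
have [h [r ->]] := IH y.
by case: (D (x, y)); [exists [::], ((y :: h) :: r) | exists (y :: h), r].
Qed.

Lemma path_edges_cons2 (x y : T) s :
  path_edges (x :: y :: s) = (x, y) :: path_edges (y :: s).
Proof. by []. Qed.

Lemma flatten_split_at D x s : flatten (split_at D x s) = x :: s.
Proof.
elim: s x => [|y s IH] x //=.
have := IH y; have [h [r E]] := split_at_head D y s; rewrite E => /= <-.
by case: (D (x, y)).
Qed.

Lemma edges_split_at D x s :
  flatten (map (@path_edges T) (split_at D x s)) = filter (predC D) (path_edges (x :: s)).
Proof.
elim: s x => [|y s IH] x //=.
have := IH y; have [h [r E]] := split_at_head D y s; rewrite E => /= <-.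
by case: (D (x, y)).
Qed.

(* Each removed edge creates two new endpoints. *)
Lemma ends_split_at D S x s :
  \sum_(q <- split_at D x s) ends_in S q =
  ends_in S (x :: s) + \sum_(z <- path_edges (x :: s) | D z) ((z.1 \in S) + (z.2 \in S)).
Proof.
elim: s x => [|y s IH] x; first by rewrite /= big_cons !big_nil.
rewrite path_edges_cons2 big_cons split_at_cons.
have := IH y; have [h [r E]] := split_at_head D y s; rewrite E.
by case: (D (x, y)); rewrite !big_cons /= => H; lia.
Qed.

Lemma path_split_at (e : rel T) D x s : path e x s ->
  all (fun q => if q is x' :: s' then path e x' s' else false) (split_at D x s).
Proof.
elim: s x => [|y s IH] x //= /andP[exy /IH].
have [h [r E]] := split_at_head D y s; rewrite E /= => /andP[ph ar].
by case: (D (x, y)) => /=; rewrite ?ph ?exy ?ar.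
Qed.

Lemma eq_split_at_in D D' x s :
  {in path_edges (x :: s), D =1 D'} -> split_at D x s = split_at D' x s.
Proof.
elim: s x => [|y s IH] x //= H.
rewrite IH; last by move=> z zin; apply: H; rewrite path_edges_cons2 in_cons zin orbT.
by rewrite H // path_edges_cons2 mem_head.
Qed.

Lemma split_at_free D x s :
  {in path_edges (x :: s), forall z, ~~ D z} -> split_at D x s = [:: x :: s].
Proof.
elim: s x => [|y s IH] x //= H.
rewrite IH ?(negbTE (H _ _)) // ?path_edges_cons2 ?mem_head //.
by move=> z zin; apply: H; rewrite path_edges_cons2 in_cons zin orbT.
Qed.

Lemma split_at_cat D x s1 y s2 : D (last x s1, y) ->
  split_at D x (s1 ++ y :: s2) = split_at D x s1 ++ split_at D y s2.
Proof.
elim: s1 x => [|z s1 IH] x /=; first by move=> ->.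
move=> /IH ->; have [h [r ->]] := split_at_head D z s1.
by case: (D (x, z)).
Qed.

Lemma split_at_predU D D' x s :
  split_at (predU D D') x s = flatten [seq pieces D' q | q <- split_at D x s].
Proof.
elim: s x => [|y s IH] x //=.
rewrite IH; have [h [r ->]] := split_at_head D y s.
case: (D (x, y)) => //=.
by have [h' [r' ->]] := split_at_head D' y h; case: (D' (x, y)).
Qed.

End Splitting.

Section Cutting.
Variable T : finType.
Implicit Types (D : pred (T * T)) (F : seq (T * T)) (C L : seq (seq T)) (S : {set T}).

Definition starts_at (v : T) (q : seq T) : bool :=
  if q is x :: _ then x == v else false.
Definition ends_at (v : T) (q : seq T) : bool :=
  if q is x :: s then last x s == v else false.

Definition nontrivial (q : seq T) : bool := 1 < size q.

Definition all_pieces D C : seq (seq T) := flatten [seq pieces D p | p <- C].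

Definition cut F C : seq (seq T) := [seq q <- all_pieces [in F] C | nontrivial q].

Definition sys_edges C : seq (T * T) := flatten [seq path_edges p | p <- C].

(* Number of path endpoints lying in S (the degree of S in R(C)). *)
Definition degree S C : nat := \sum_(q <- C) ends_in S q.

Lemma all_pieces_cat D C1 C2 :
  all_pieces D (C1 ++ C2) = all_pieces D C1 ++ all_pieces D C2.
Proof. by rewrite /all_pieces map_cat flatten_cat. Qed.

Lemma flatten_all_pieces D C : flatten (all_pieces D C) = flatten C.
Proof.
elim: C => //= p C IH; rewrite /all_pieces /= flatten_cat -/(all_pieces D C) IH.
by case: p => //= x s; rewrite flatten_split_at.
Qed.

Lemma all_pieces_predU D D' C :
  all_pieces (predU D D') C = all_pieces D' (all_pieces D C).
Proof.
elim: C => //= p C IH; rewrite /all_pieces /= -!/(all_pieces _ _) IH.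
rewrite all_pieces_cat; congr (_ ++ _).
by case: p => //= x s; rewrite split_at_predU.
Qed.

(* Trivial paths only split into trivial pieces, so they may be dropped
   before or after splitting. *)
Lemma cut_nontrivial D L :
  [seq q <- all_pieces D [seq q <- L | nontrivial q] | nontrivial q] =
  [seq q <- all_pieces D L | nontrivial q].
Proof.
elim: L => //= q L IH; rewrite /all_pieces /= -!/(all_pieces _ _).
by case: ifP => ntq; rewrite ?filter_cat IH //; case: q ntq => // x [].
Qed.

Lemma eq_cut F F' C : F =i F' -> cut F C = cut F' C.
Proof.
move=> eqF; rewrite /cut /all_pieces; congr (filter _ (flatten _)).
by apply: eq_map => -[|x s] //=; apply: eq_split_at_in => z _ /=; rewrite eqF.
Qed.

Lemma cut_catF F F' C : cut (F ++ F') C = cut F' (cut F C).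
Proof.
rewrite /cut cut_nontrivial -all_pieces_predU /all_pieces.
congr (filter _ (flatten _)); apply: eq_map => -[|x s] //=.
by apply: eq_split_at_in => z _; rewrite !inE mem_cat.
Qed.

Lemma cut_cat F C1 C2 : cut F (C1 ++ C2) = cut F C1 ++ cut F C2.
Proof. by rewrite /cut all_pieces_cat filter_cat. Qed.

Lemma sys_edges_cons p C : sys_edges (p :: C) = path_edges p ++ sys_edges C.
Proof. by []. Qed.

Lemma sys_edges_cat C1 C2 : sys_edges (C1 ++ C2) = sys_edges C1 ++ sys_edges C2.
Proof. by rewrite /sys_edges map_cat flatten_cat. Qed.

Lemma sys_edges_cut F C : sys_edges (cut F C) = [seq z <- sys_edges C | z \notin F].
Proof.
have sys_edges_nontrivial L : sys_edges [seq q <- L | nontrivial q] = sys_edges L.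
  elim: L => //= q L IH; case: ifP => ntq; rewrite ?sys_edges_cons IH //.
  by case: q ntq => // x [|y s].
rewrite /cut sys_edges_nontrivial; elim: C => // p C IH.
rewrite /all_pieces /= -/(all_pieces _ C) sys_edges_cat IH sys_edges_cons filter_cat.
by congr (_ ++ _); case: p => [|x s] //=; rewrite /sys_edges edges_split_at.
Qed.

Lemma size_cut_lt F C f : f \in sys_edges C -> f \in F ->
  size (sys_edges (cut F C)) < size (sys_edges C).
Proof.
move=> fE fF; rewrite sys_edges_cut size_filter -(count_predC [in F] (sys_edges C)).
by rewrite -[X in X < _]add0n ltn_add2r -has_count; apply/hasP; exists f.
Qed.

Lemma ntpath_nontrivial (e : rel T) q : is_ntpath e q -> nontrivial q.
Proof. by case: q => // x s /and3P[]. Qed.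

Lemma uniq_flatten_subseq (f : seq T -> seq T) C :
  (forall p, subseq (f p) p) -> uniq (flatten C) -> uniq (flatten (map f C)).
Proof.
move=> sub; elim: C => //= p C IH; rewrite !cat_uniq => /and3P[up dis uC].
rewrite (subseq_uniq (sub p) up) IH // andbT.
apply/hasPn => x /flattenP[_ /mapP[q qC ->] xq]; apply/negP => xp.
have xC : x \in flatten C by apply/flattenP; exists q => //; exact: (mem_subseq (sub q) xq).
by move/hasPn: dis => /(_ x xC); rewrite (mem_subseq (sub p) xp).
Qed.

Lemma path_system_cut e F C : path_system e C -> path_system e (cut F C).
Proof.
case/andP => /allP ntC uC.
have uF : uniq (flatten (cut F C)).
  apply: subseq_uniq uC; rewrite -(flatten_all_pieces [in F] C) /cut.
  elim: (all_pieces _ _) => //= q L IH; case: ifP => _ /=; first by rewrite cat_subseq.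
  exact: subseq_trans IH (suffix_subseq _ _).
rewrite /path_system uF andbT; apply/allP => q qcut.
move: (qcut); rewrite mem_filter => /andP[ntq /flattenP[_ /mapP[[|x s] pC ->] qp]] //.
have /and3P[_ pth _] := ntC _ pC.
have /allP/(_ q qp) := path_split_at [in F] pth.
case: q ntq qcut {qp} => // y t ntq qcut pq; apply/and3P; split => //.
case/splitPr: qcut uF => L1 L2; rewrite flatten_cat /= cat_uniq -cat_cons cat_uniq.
by case/and3P => _ _ /andP[].
Qed.

Lemma mem_path_edges (u v x : T) s :
  (u, v) \in path_edges (x :: s) -> (u \in x :: s) /\ (v \in s).
Proof.
elim: s x => [|y s IH] x //; rewrite path_edges_cons2 in_cons.
case/orP => [/eqP[-> ->]|/IH[H1 H2]]; first by rewrite !mem_head.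
by split; rewrite in_cons ?H1 ?H2 orbT.
Qed.

Lemma path_edgesP (u v x : T) s : (u, v) \in path_edges (x :: s) ->
  exists s1 s2, s = s1 ++ v :: s2 /\ last x s1 = u.
Proof.
elim: s x => [|y s IH] x //; rewrite path_edges_cons2 in_cons.
case/orP => [/eqP[-> ->]|/IH[s1 [s2 [-> <-]]]]; first by exists [::], s.
by exists (y :: s1), s2.
Qed.

Lemma map_fst_path_edges (x : T) s : [seq z.1 | z <- path_edges (x :: s)] = belast x s.
Proof. by elim: s x => //= y s IH x; rewrite IH. Qed.

Lemma map_snd_path_edges (p : seq T) : [seq z.2 | z <- path_edges p] = behead p.
Proof. by case: p => // x s; elim: s x => //= y s IH x; rewrite IH. Qed.

Lemma uniq_edge_tails e C : path_system e C -> uniq [seq z.1 | z <- sys_edges C].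
Proof.
case/andP => _; rewrite /sys_edges map_flatten -map_comp.
apply: uniq_flatten_subseq => -[|x s] //.
by rewrite /comp map_fst_path_edges [X in subseq _ X]lastI subseq_rcons.
Qed.

Lemma uniq_edge_heads e C : path_system e C -> uniq [seq z.2 | z <- sys_edges C].
Proof.
case/andP => _; rewrite /sys_edges map_flatten -map_comp.
by apply: uniq_flatten_subseq => -[|x s] //; rewrite /comp map_snd_path_edges subseq_cons.
Qed.

Lemma uniq_sys_edges e C : path_system e C -> uniq (sys_edges C).
Proof. by move/uniq_edge_tails/map_uniq. Qed.

Lemma path_system_uniq e C : path_system e C -> uniq C.
Proof.
case/andP; elim: C => //= q C IH /andP[ntq ntC]; rewrite cat_uniq => /and3P[_ dis uC].
rewrite IH ?ntC // andbT; apply: contraNN dis; case: q ntq => // x s _ qC.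
by apply/hasP; exists x; [apply/flattenP; exists (x :: s)|]; rewrite ?mem_head.
Qed.

Lemma cut_free F C : all nontrivial C ->
  {in sys_edges C, forall z, z \notin F} -> cut F C = C.
Proof.
elim: C => //= p C IH /andP[ntp ntC] free; rewrite -cat1s cut_cat IH //; last first.
  by move=> z zC; apply: free; rewrite sys_edges_cons mem_cat zC orbT.
case: p ntp free => // x s ntp free; rewrite /cut /all_pieces /= cats0.
by rewrite split_at_free /= ?ntp // => z zp; apply: free; rewrite sys_edges_cons mem_cat zp.
Qed.

Lemma cut_one_edge e C f : path_system e C -> f \in sys_edges C ->
  exists X Y lb ra, [/\ C = X ++ (lb ++ ra) :: Y,
    cut [:: f] C = X ++ [seq q <- [:: lb; ra] | nontrivial q] ++ Y,
    ends_at f.1 lb & starts_at f.2 ra].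
Proof.
move=> psC fE; have uE := uniq_sys_edges psC.
case/andP: psC => /allP ntC _.
case/flattenP: fE => _ /mapP[p pC ->] fp.
case/splitPr: pC ntC uE => X Y ntC.
rewrite sys_edges_cat sys_edges_cons !cat_uniq => /and3P[_ nX /and3P[_ /hasPn nY _]].
have nt_in Z : {subset Z <= X ++ p :: Y} -> all nontrivial Z.
  by move=> sub; apply/allP => q /sub/ntC/ntpath_nontrivial.
have cutX : cut [:: f] X = X.
  apply: cut_free => [|z zX]; first by apply: nt_in => q qX; rewrite mem_cat qX.
  rewrite inE; apply: contraNN nX => /eqP zf.
  by apply/hasP; exists f; rewrite ?mem_cat ?fp // -zf.
have cutY : cut [:: f] Y = Y.
  apply: cut_free => [|z zY]; first by apply: nt_in => q qY; rewrite mem_cat in_cons qY !orbT.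
  by rewrite inE; apply: contraNN (nY z zY) => /eqP->.
case: p ntC fp {nX nY nt_in} => [//|x s] ntC fp.
have /and3P[_ _ up] : is_ntpath e (x :: s) by apply: ntC; rewrite mem_cat mem_head orbT.
case: f fp cutX cutY => u v /= fp cutX cutY.
have [s1 [s2 [Es lu]]] := path_edgesP fp; subst s.
move: up; rewrite -cat_cons cat_uniq => /and3P[_ dis _].
have vs1 : v \notin s1.
  by apply: contraNN (hasPn dis v (mem_head _ _)) => vs1; rewrite in_cons vs1 orbT.
have us2 : u \notin v :: s2 by apply/negP => /(hasPn dis u); rewrite -lu mem_last.
exists X, Y, (x :: s1), (v :: s2); split => //=; last by rewrite lu.
rewrite cut_cat (cut_cat _ [:: _]) cutX cutY; congr (_ ++ _ ++ _).
rewrite /cut /all_pieces /= cats0 split_at_cat /= ?inE ?lu //.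
rewrite !split_at_free // => -[u' v'] /mem_path_edges[u'p v'p]; rewrite inE; apply/eqP => -[eu ev].
  by rewrite -eu u'p in us2.
by rewrite -ev v'p in vs1.
Qed.

(* Distinct edges of a path system have distinct tails and distinct heads,
   so no path ends at the tails of two of them, or starts at two heads. *)
Lemma ends_at_inj e C f f' q : path_system e C -> f \in sys_edges C -> f' \in sys_edges C ->
  ends_at f.1 q -> ends_at f'.1 q -> f = f'.
Proof.
move=> /uniq_edge_tails ut fE f'E; case: q => // x s /eqP e1 /eqP e2.
by apply: (uniq_map_eq ut fE f'E); rewrite /= -e1 -e2.
Qed.

Lemma starts_at_inj e C f f' q : path_system e C -> f \in sys_edges C -> f' \in sys_edges C ->
  starts_at f.2 q -> starts_at f'.2 q -> f = f'.
Proof.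
move=> /uniq_edge_heads uh fE f'E; case: q => // x s /eqP e1 /eqP e2.
by apply: (uniq_map_eq uh fE f'E); rewrite /= -e1 -e2.
Qed.

Lemma sum_sys_edges_in C F (G : T * T -> nat) : uniq (sys_edges C) -> uniq F ->
  {subset F <= sys_edges C} -> \sum_(z <- sys_edges C | z \in F) G z = \sum_(z <- F) G z.
Proof.
move=> uE uF sub; rewrite -big_filter; apply/perm_big/uniq_perm; rewrite ?filter_uniq //.
by move=> z; rewrite mem_filter andb_idr //; apply: sub.
Qed.

End Cutting.

Section Crossing.
Variable T : finType.
Implicit Types (D : pred (T * T)) (F : seq (T * T)) (C L : seq (seq T)) (S : {set T}) (q : seq T).

Definition crosses S q : bool := odd (ends_in S q).

Definition touches (Z : {set T}) q : bool :=
  if q is x :: s then (x \in Z) || (last x s \in Z) else false.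

Lemma ends_in_cons S (x : T) s : ends_in S (x :: s) = (x \in S) + (last x s \in S).
Proof. by []. Qed.

Lemma crosses_nontrivial S q : crosses S q -> nontrivial q.
Proof. by case: q => [|x [|y s]] //; rewrite /crosses ends_in_cons /= addnn odd_double. Qed.

Lemma crosses_setC S q : crosses (~: S) q = crosses S q.
Proof. by case: q => // x s; rewrite /crosses !ends_in_cons !inE; do 2!case: (_ \in S). Qed.

Lemma crosses_setI S1 S2 q :
  ~~ crosses S1 q -> ~~ crosses S2 q -> ~~ crosses (S1 :&: S2) q.
Proof.
case: q => // x s; rewrite /crosses !ends_in_cons !inE.
by do 2!case: (_ \in S1); do 2!case: (_ \in S2).
Qed.

Lemma crosses_setI_touches S1 S2 q :
  crosses S1 q -> touches (S1 :&: S2) q -> crosses (S1 :&: S2) q.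
Proof.
case: q => // x s; rewrite /crosses !ends_in_cons /= !inE.
by do 2!case: (_ \in S1); do 2!case: (_ \in S2).
Qed.

Lemma odd_degree S C : odd (degree S C) = odd (count (crosses S) C).
Proof. by elim: C => [|q C IH]; rewrite /degree ?big_nil ?big_cons //= oddD IH oddD oddb. Qed.

Lemma degree_cat S C1 C2 : degree S (C1 ++ C2) = degree S C1 + degree S C2.
Proof. exact: big_cat. Qed.

(* Each deleted edge contributes its two ends as new endpoints. *)
Lemma degree_all_pieces D S C :
  degree S (all_pieces D C) =
  degree S C + \sum_(z <- sys_edges C | D z) ((z.1 \in S) + (z.2 \in S)).
Proof.
elim: C => [|p C IH]; first by rewrite /degree !big_nil.
rewrite -cat1s all_pieces_cat !degree_cat IH sys_edges_cat big_cat /=.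
suff -> : degree S (pieces D p) + degree S [::] =
  degree S [:: p] + \sum_(z <- sys_edges [:: p] | D z) ((z.1 \in S) + (z.2 \in S)) by lia.
case: p => [|x s]; rewrite /sys_edges /degree /= ?cats0 big_seq1 ?big_nil //.
by rewrite addn0 ends_split_at.
Qed.

Lemma odd_degree_cut S F C :
  odd (degree S (cut F C)) =
  odd (degree S C) (+) odd (\sum_(z <- sys_edges C | z \in F) ((z.1 \in S) + (z.2 \in S))).
Proof.
rewrite odd_degree count_filter.
rewrite (eq_count (a2 := crosses S)); last first.
  by move=> q /=; case: (boolP (crosses S q)) => // /crosses_nontrivial ->.
by rewrite -odd_degree degree_all_pieces oddD.
Qed.

Lemma crosses_cut S F C : {in F, forall z, (z.1 \in S) = (z.2 \in S)} ->
  has (crosses S) C -> has (crosses S) (cut F C).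
Proof.
move=> FS /hasP[p pC crp].
have : odd (degree S (cut F [:: p])).
  rewrite odd_degree_cut /degree big_seq1 -/(crosses S p) crp /=.
  by apply: even_sum => z /FS ->; rewrite addnn odd_double.
rewrite odd_degree => /odd_gt0; rewrite -has_count => /hasP[q qp crq].
apply/hasP; exists q => //.
by case/splitPr: pC => C1 C2; rewrite cut_cat (cut_cat _ [:: p]) !mem_cat qp orbT.
Qed.

Lemma odd_degree_setC S C : odd (degree (~: S) C) = odd (degree S C).
Proof. by rewrite !odd_degree (eq_count (crosses_setC S)). Qed.

Lemma crosses_cat S (u v : T) lb ra : ends_at u lb -> starts_at v ra ->
  crosses S (lb ++ ra) = crosses S lb (+) crosses S ra (+) odd ((u \in S) + (v \in S)).
Proof.
case: lb => // x t /eqP lu; case: ra => // y r /eqP yv.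
rewrite cat_cons /crosses !ends_in_cons last_cat -lu -yv /= !oddD !oddb.
by do 4!case: (_ \in S).
Qed.

Lemma ends_at_touches (Z : {set T}) v q : ends_at v q -> v \in Z -> touches Z q.
Proof. by case: q => // x s /eqP<- /= ->; rewrite orbT. Qed.

Lemma starts_at_touches (Z : {set T}) v q : starts_at v q -> v \in Z -> touches Z q.
Proof. by case: q => // x s /eqP<- /= ->. Qed.

Lemma touches_sub (Z Z' : {set T}) q : Z \subset Z' -> touches Z q -> touches Z' q.
Proof. by move/subsetP=> sub; case: q => // x s /= /orP[] /sub ->; rewrite ?orbT. Qed.

(* If g1 and g2 are the only paths crossing S1 and S2 respectively, and
   both have an endpoint in S1 :&: S2, then exactly g1 and g2 cross the
   meet, which therefore has even degree. *)
Lemma meet_of_lone_crossers L S1 S2 g1 g2 : uniq L -> g1 != g2 ->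
  [seq q <- L | crosses S1 q] = [:: g1] -> [seq q <- L | crosses S2 q] = [:: g2] ->
  touches (S1 :&: S2) g1 -> touches (S1 :&: S2) g2 -> ~~ odd (degree (S1 :&: S2) L).
Proof.
move=> uL g12 only1 only2 t1 t2.
have lone S g : [seq q <- L | crosses S q] = [:: g] ->
    (g \in L /\ crosses S g) /\ forall q, q \in L -> crosses S q = (q == g).
  move=> onlyg; split; first by apply/andP; rewrite andbC -mem_filter onlyg mem_head.
  by move=> q qL; rewrite -[LHS]andbT -qL -mem_filter onlyg inE.
have [[g1L cr1] other1] := lone _ _ only1; have [[g2L cr2] other2] := lone _ _ only2.
have crossers : [seq q <- L | crosses (S1 :&: S2) q] =i [:: g1; g2].
  move=> q; rewrite mem_filter !inE; apply/andP/orP => [[crq qL]|[]/eqP->].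
  - apply/orP; move: crq; apply: contraLR => /norP[q1 q2].
    by apply: crosses_setI; rewrite ?other1 ?other2.
  - by split; first exact: crosses_setI_touches.
  - by split; first by rewrite setIC crosses_setI_touches // setIC.
rewrite odd_degree -size_filter (perm_size (uniq_perm (filter_uniq _ uL) _ crossers)) //=.
by rewrite inE g12.
Qed.

Lemma cut_lone_crosser e C S f : path_system e C -> f \in sys_edges C ->
  ~~ has (crosses S) C -> (f.1 \in S) + (f.2 \in S) = 1 ->
  exists2 g, [seq q <- cut [:: f] C | crosses S q] = [:: g] & ends_at f.1 g || starts_at f.2 g.
Proof.
move=> psC fC /hasPn ncr fS.
have [X [Y [lb [ra [EC Ecut lbf raf]]]]] := cut_one_edge psC fC.
have one : crosses S lb (+) crosses S ra.
  have : ~~ crosses S (lb ++ ra) by apply: ncr; rewrite EC mem_cat mem_head orbT.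
  by rewrite (crosses_cat S lbf raf) fS addbT negbK.
have none Z : {subset Z <= C} -> [seq q <- Z | crosses S q] = [::].
  by move=> sub; apply/eqP; rewrite -[_ == _]negbK -has_filter; apply/hasPn => q /sub/ncr.
have crossers : [seq q <- cut [:: f] C | crosses S q] = [seq q <- [:: lb; ra] | crosses S q].
  rewrite Ecut !filter_cat (none X) ?(none Y) ?cats0 ?cat0s -?filter_predI.
  - apply: eq_filter => q /=.
    by case: (boolP (crosses S q)) => // /crosses_nontrivial.
  - by move=> q qY; rewrite EC mem_cat in_cons qY !orbT.
  - by move=> q qX; rewrite EC mem_cat qX.
move: one; case crl: (crosses S lb) => /= one.
  by exists lb; [rewrite crossers /= crl (negbTE one) | rewrite lbf].
by exists ra; [rewrite crossers /= crl one | rewrite raf orbT].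
Qed.

End Crossing.

Section Partition.
Variables (T : finType) (P : {set {set T}}).
Hypothesis partP : partition P [set: T].
Implicit Types (C L : seq (seq T)) (S : {set T}).

Lemma trivIP : trivIset P.
Proof. by case/and3P: partP. Qed.

Lemma pblock_in (v : T) : pblock P v \in P.
Proof. by apply: pblock_mem; rewrite (cover_partition partP) inE. Qed.

Lemma mem_pblock_self (v : T) : v \in pblock P v.
Proof. by rewrite mem_pblock (cover_partition partP) inE. Qed.

(* A saturated set is a union of blocks of P. *)
Definition saturated S :=
  forall A, A \in P -> forall u v, u \in A -> v \in A -> (u \in S) = (v \in S).

Lemma saturated_block S A x : saturated S -> A \in P -> x \in A ->
  (A \subset S) = (x \in S).
Proof.
move=> satS AP xA; apply/subsetP/idP => [|xS v vA]; first exact.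
by rewrite (satS A AP v x vA xA).
Qed.

Lemma saturatedC S : saturated S -> saturated (~: S).
Proof. by move=> satS A AP u v uA vA; rewrite !inE (satS A AP u v). Qed.

Lemma saturatedI S1 S2 : saturated S1 -> saturated S2 -> saturated (S1 :&: S2).
Proof. by move=> sat1 sat2 A AP u v uA vA; rewrite !inE (sat1 A AP u v) ?(sat2 A AP u v). Qed.

Lemma block_saturated B : B \in P -> saturated B.
Proof.
move=> BP A AP u v uA vA.
have inB w : w \in A -> (w \in B) = (A == B).
  move=> wA; apply/idP/eqP => [wB|<- //].
  by rewrite -(def_pblock trivIP BP wB) (def_pblock trivIP AP wA).
by rewrite !inB.
Qed.

Lemma red_adj_sym C : symmetric (red_adj P C).
Proof.
move=> Z Z'; rewrite /red_adj andbCA; congr [&& _, _ & _].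
by apply: eq_has => -[|x s] //; rewrite orbC.
Qed.

Lemma connected_crosses C S u v :
  (forall A B, A \in P -> B \in P -> connect (red_adj P C) A B) ->
  saturated S -> u \in S -> v \notin S -> has (crosses S) C.
Proof.
move=> conC satS uS vS; apply: contraT => /hasPn ncr.
have closedS : closed (red_adj P C) [pred Z : {set T} | Z \subset S].
  move=> Z Z' /and3P[ZP Z'P /hasP[[|x s] // qC ends]]; have := ncr _ qC.
  rewrite /crosses ends_in_cons !inE /=.
  case/orP: ends => /andP[h1 h2].
    by rewrite (saturated_block satS ZP h1) (saturated_block satS Z'P h2); do 2!case: (_ \in S).
  by rewrite (saturated_block satS ZP h2) (saturated_block satS Z'P h1); do 2!case: (_ \in S).
have := closed_connect closedS (conC _ _ (pblock_in u) (pblock_in v)).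
rewrite !inE (saturated_block satS (pblock_in u) (mem_pblock_self u)).
by rewrite (saturated_block satS (pblock_in v) (mem_pblock_self v)) uS (negbTE vS).
Qed.

Lemma crosses_connected C :
  (forall S, saturated S -> (exists u, u \in S) -> (exists v, v \notin S) -> has (crosses S) C) ->
  forall A B, A \in P -> B \in P -> connect (red_adj P C) A B.
Proof.
move=> cross A B AP BP; apply: contraT => nAB; have tP := trivIP.
pose S := [set v | connect (red_adj P C) A (pblock P v)].
have satS : saturated S.
  by move=> Z ZP u v uZ vZ; rewrite !inE (def_pblock tP ZP uZ) (def_pblock tP ZP vZ).
have [a aA] : exists a, a \in A by apply/set0Pn; apply: contraTneq AP => ->; case/and3P: partP.
have [b bB] : exists b, b \in B by apply/set0Pn; apply: contraTneq BP => ->; case/and3P: partP.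
have aS : a \in S by rewrite inE (def_pblock tP AP aA).
have bS : b \notin S by rewrite inE (def_pblock tP BP bB).
have /hasP[[|x s] // qC] := cross S satS (ex_intro _ a aS) (ex_intro _ b bS).
have edge : red_adj P C (pblock P x) (pblock P (last x s)).
  by rewrite /red_adj !pblock_in /=; apply/hasP; exists (x :: s); rewrite //= !mem_pblock_self.
rewrite /crosses ends_in_cons !inE (same_connect1r (sym_connect_sym (red_adj_sym C)) edge).
by rewrite addnn odd_double.
Qed.

(* A vertex lies in exactly one block; for a saturated S, v lies in S iff
   that block is contained in S. *)
Lemma mem_saturated S (v : T) : saturated S ->
  ((v \in S) : nat) = \sum_(B in P | B \subset S) (v \in B).
Proof.
move=> satS; case vS: (v \in S); last first.
  rewrite big1 // => B /andP[BP BS]; apply/eqP; rewrite eqb0.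
  by apply: contraFN vS => /(subsetP BS).
rewrite (bigD1 (pblock P v)) /=; last first.
  by rewrite pblock_in (saturated_block satS (pblock_in v) (mem_pblock_self v)).
rewrite mem_pblock_self big1 // => B /andP[/andP[BP _] neq]; apply/eqP; rewrite eqb0.
by apply: contra neq => vB; rewrite (def_pblock trivIP BP vB).
Qed.

Lemma even_saturated C S : (forall B, B \in P -> ~~ odd (degree B C)) ->
  saturated S -> ~~ odd (degree S C).
Proof.
move=> evenC satS.
have -> : degree S C = \sum_(B in P | B \subset S) degree B C.
  rewrite exchange_big /=; apply: eq_bigr => -[|x s] _; first by rewrite big1.
  by rewrite ends_in_cons (mem_saturated x satS) (mem_saturated (last x s) satS) -big_split.
by apply: even_sum => B /andP[/evenC].
Qed.

Lemma saturated_blockC S A : saturated S -> A \in P -> ~~ (A \subset S) -> A \subset ~: S.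
Proof.
move=> satS AP /subsetPn[a aA aS]; apply/subsetP => v vA.
by rewrite inE (satS A AP v a vA aA).
Qed.

Definition inner (z : T * T) : bool := pblock P z.1 == pblock P z.2.

Lemma inner_saturated S z : saturated S -> inner z -> (z.1 \in S) = (z.2 \in S).
Proof.
move=> satS /eqP same; apply: (satS _ (pblock_in z.1)); first exact: mem_pblock_self.
by rewrite same mem_pblock_self.
Qed.

(* Deleting edges inside blocks keeps C connecting: such edges have both
   ends on the same side of every saturated set, so neither the crossings
   nor the parities of R(C) are affected. *)
Lemma cut_inner C F : connecting P C -> all inner F -> connecting P (cut F C).
Proof.
move=> [conC evenC] /allP innerF.
have same S : saturated S -> {in F, forall z, (z.1 \in S) = (z.2 \in S)}.
  by move=> satS z /innerF; apply: inner_saturated.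
split => [|B BP].
  apply: crosses_connected => S satS [u uS] [v vS].
  exact: crosses_cut (same S satS) (connected_crosses conC satS uS vS).
rewrite -/(degree B _) odd_degree_cut (negbTE (evenC B BP)) /=.
by apply: even_sum => z zF; rewrite (same B (block_saturated BP)) // addnn odd_double.
Qed.

End Partition.

Section TwoBlocks.
Variables (T : finType) (e : rel T) (P : {set {set T}}) (A B : {set T}).
Hypotheses (partP : partition P [set: T]) (AP : A \in P) (BP : B \in P).
Variable C : seq (seq T).
Hypotheses (psC : path_system e C) (conC : connecting P C).
Implicit Types (S : {set T}) (L : seq (seq T)) (q : seq T) (z : T * T).

Definition AB_edge z : bool :=
  ((z.1 \in A) && (z.2 \in B)) || ((z.1 \in B) && (z.2 \in A)).

Lemma n_edges_between_count L : n_edges_between L A B = count AB_edge (sys_edges L).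
Proof.
elim: L => [|p L IH]; first by rewrite /n_edges_between big_nil.
by rewrite /n_edges_between big_cons -/(n_edges_between _ _ _) IH sys_edges_cons count_cat.
Qed.

Lemma AB_edge_ends S z : saturated P S -> AB_edge z ->
  (z.1 \in S) + (z.2 \in S) = (A \subset S) + (B \subset S).
Proof.
move=> satS /orP[]/andP[z1 z2].
  by rewrite (saturated_block satS AP z1) (saturated_block satS BP z2).
by rewrite (saturated_block satS AP z2) (saturated_block satS BP z1) addnC.
Qed.

Lemma AB_edge_across S z : A \subset S -> B \subset ~: S -> AB_edge z ->
  (z.1 \in S) + (z.2 \in S) = 1.
Proof.
move=> /subsetP AS /subsetP BS /orP[]/andP[z1 z2].
  by rewrite AS //; move/BS: z2; rewrite inE => /negbTE->.
by rewrite (AS _ z2); move/BS: z1; rewrite inE => /negbTE->.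
Qed.

Lemma AB_edge_same S z : saturated P S -> (A \subset S) = (B \subset S) -> AB_edge z ->
  (z.1 \in S) = (z.2 \in S).
Proof.
move=> satS sameAB ABz; have := AB_edge_ends satS ABz; rewrite sameAB.
by do 2!case: (_ \in S); case: (B \subset S).
Qed.

Lemma cut_two_even g h : g \in sys_edges C -> h \in sys_edges C -> g != h ->
  AB_edge g -> AB_edge h -> forall Z, Z \in P -> ~~ odd (degree Z (cut [:: g; h] C)).
Proof.
move=> gE hE gh ABg ABh Z ZP; have satZ := block_saturated partP ZP.
rewrite odd_degree_cut (negbTE (conC.2 Z ZP)) /=.
rewrite sum_sys_edges_in ?(uniq_sys_edges psC) /= ?inE ?gh //; last first.
  by move=> z; rewrite !inE => /orP[]/eqP->.
by rewrite !big_cons big_nil addn0 !(AB_edge_ends satZ) // addnn odd_double.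
Qed.

Lemma cut_odd_AB F S : uniq F -> {subset F <= sys_edges C} -> all AB_edge F -> odd (size F) ->
  saturated P S -> A \subset S -> B \subset ~: S -> odd (degree S (cut F C)).
Proof.
move=> uF FE /allP ABF oddF satS AS BS.
rewrite odd_degree_cut (negbTE (even_saturated partP conC.2 satS)) /=.
rewrite sum_sys_edges_in ?(uniq_sys_edges psC) // big_seq (eq_bigr (fun=> 1)).
  by rewrite -big_seq sum1_size.
by move=> z /ABF; apply: AB_edge_across.
Qed.

Record lone_crosser (f : T * T) S (g : seq T) L : Prop := LoneCrosser {
  lc_sat : saturated P S;
  lc_A : A \subset S;
  lc_B : B \subset ~: S;
  lc_only : [seq q <- L | crosses S q] = [:: g];
  lc_piece : ends_at f.1 g || starts_at f.2 g }.

(* If deleting the A-B edges g and h disconnects R(C), some saturated set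
   containing A but not B is crossed by no remaining path: the parities are
   unaffected, so connectivity fails, and a saturated set not separating A
   from B stays crossed, since C crosses it. *)
Lemma uncrossed_set g h : g \in sys_edges C -> h \in sys_edges C -> g != h ->
  AB_edge g -> AB_edge h -> ~ connecting P (cut [:: g; h] C) ->
  exists S, [/\ saturated P S, A \subset S, B \subset ~: S & ~~ has (crosses S) (cut [:: g; h] C)].
Proof.
move=> gE hE gh ABg ABh ncon.
have [S [satS [u uS] [v vS] ncr]] : exists S, [/\ saturated P S, exists u, u \in S,
    exists v, v \notin S & ~~ has (crosses S) (cut [:: g; h] C)].
  apply: NNPP => none; apply: ncon; split; last exact: cut_two_even.
  apply: (crosses_connected partP) => S satS ex_u ex_v; apply: contraT => ncr.
  by case: none; exists S.
have sepS : (A \subset S) != (B \subset S).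
  apply: contraNneq ncr => sameAB.
  apply: crosses_cut (connected_crosses partP conC.1 satS uS vS) => z.
  by rewrite !inE => /orP[]/eqP->; apply: AB_edge_same.
have [AS|nAS] := boolP (A \subset S).
  exists S; split => //; apply: (saturated_blockC satS BP).
  by apply: contra sepS => BS; rewrite AS BS.
exists (~: S); rewrite (eq_has (crosses_setC S)) setCK; split => //.
- exact: saturatedC.
- exact: (saturated_blockC satS AP).
- by move: sepS; rewrite (negbTE nAS); case: (B \subset S).
Qed.

Lemma lone_crosser_exists f g h : f \in sys_edges C -> g \in sys_edges C -> h \in sys_edges C ->
  AB_edge f -> AB_edge g -> AB_edge h -> f != g -> f != h -> g != h ->
  ~ connecting P (cut [:: g; h] C) -> exists S g0, lone_crosser f S g0 (cut [:: g; h; f] C).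
Proof.
move=> fE gE hE ABf ABg ABh fg fh gh ncon.
have [S [satS AS BS ncr]] := uncrossed_set gE hE gh ABg ABh ncon.
have fC' : f \in sys_edges (cut [:: g; h] C).
  by rewrite sys_edges_cut mem_filter !inE negb_or fg fh.
have [g0 only piece] := cut_lone_crosser (path_system_cut _ psC) fC' ncr (AB_edge_across AS BS ABf).
have -> : cut [:: g; h; f] C = cut [:: f] (cut [:: g; h] C) by rewrite -cut_catF.
by exists S, g0.
Qed.

Lemma AB_edge_tail z : AB_edge z -> (z.1 \in A) || (z.1 \in B).
Proof. by case/orP=> /andP[-> _]; rewrite ?orbT. Qed.

Lemma AB_edge_head z : AB_edge z -> (z.2 \in A) || (z.2 \in B).
Proof. by case/orP=> /andP[_ ->]; rewrite ?orbT. Qed.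

Lemma lone_crosser_touches f S g L : AB_edge f -> lone_crosser f S g L ->
  touches A g || touches B g.
Proof.
move=> ABf [_ _ _ _ /orP[gf|gf]].
  by case/orP: (AB_edge_tail ABf) => /(ends_at_touches gf) ->; rewrite ?orbT.
by case/orP: (AB_edge_head ABf) => /(starts_at_touches gf) ->; rewrite ?orbT.
Qed.

Lemma crosses_AB S x s : A \subset S -> B \subset ~: S -> crosses S (x :: s) ->
  (x \in A) || (x \in B) -> (last x s \in A) || (last x s \in B) ->
  touches A (x :: s) && touches B (x :: s).
Proof.
move=> /subsetP AS /subsetP BS crS xAB lAB.
have inS v : (v \in A) || (v \in B) -> (v \in S) = (v \in A).
  case/orP => [/AS -> //|vB]; move: (BS v vB); rewrite inE.
  by case: (boolP (v \in A)) => [/AS -> //| _ /negbTE].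
rewrite /crosses ends_in_cons (inS x xAB) (inS _ lAB) in crS.
move: crS xAB lAB => /=.
by do 2!case: (_ \in A); do 2!case: (_ \in B).
Qed.

Section ThreeEdges.
Variables f1 f2 f3 : T * T.
Hypotheses (f1E : f1 \in sys_edges C) (f2E : f2 \in sys_edges C) (f3E : f3 \in sys_edges C).
Hypotheses (AB1 : AB_edge f1) (AB2 : AB_edge f2) (AB3 : AB_edge f3).
Hypotheses (n12 : f1 != f2) (n13 : f1 != f3) (n23 : f2 != f3).

Let L := cut [:: f1; f2; f3] C.

Lemma uniq_L : uniq L.
Proof. exact: path_system_uniq (path_system_cut _ psC). Qed.

Lemma odd_degree_L S : saturated P S -> A \subset S -> B \subset ~: S -> odd (degree S L).
Proof.
apply: cut_odd_AB; rewrite /= ?inE ?negb_or ?n12 ?n13 ?n23 ?AB1 ?AB2 ?AB3 //.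
by move=> z; rewrite !inE => /or3P[]/eqP->.
Qed.

(* Two distinct lone crossers cannot both touch A, nor both touch B: the
   corresponding meet of saturated sets would have even degree. *)
Lemma lone_crossers_apart fa fb Sa Sb ga gb :
  lone_crosser fa Sa ga L -> lone_crosser fb Sb gb L -> ga != gb ->
  (touches A ga && touches A gb) || (touches B ga && touches B gb) -> False.
Proof.
move=> [satA ASa BSa onlyA _] [satB ASb BSb onlyB _] gab /orP[]/andP[ta tb].
  have AS : A \subset Sa :&: Sb by rewrite subsetI ASa.
  have oddS : odd (degree (Sa :&: Sb) L).
    by apply: odd_degree_L; [exact: saturatedI | | rewrite setCI subsetU // BSa].
  have := meet_of_lone_crossers uniq_L gab onlyA onlyB (touches_sub AS ta) (touches_sub AS tb).
  by rewrite oddS.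
have onlyCA : [seq q <- L | crosses (~: Sa) q] = [:: ga] by rewrite (eq_filter (crosses_setC Sa)).
have onlyCB : [seq q <- L | crosses (~: Sb) q] = [:: gb] by rewrite (eq_filter (crosses_setC Sb)).
have BS : B \subset ~: Sa :&: ~: Sb by rewrite subsetI BSa.
have oddS : odd (degree (~: Sa :&: ~: Sb) L).
  rewrite -odd_degree_setC; apply: odd_degree_L; rewrite ?setCK //.
    by apply/saturatedC/saturatedI; apply: saturatedC.
  by rewrite setCI !setCK subsetU // ASa.
have := meet_of_lone_crossers uniq_L gab onlyCA onlyCB (touches_sub BS ta) (touches_sub BS tb).
by rewrite oddS.
Qed.

(* A lone crosser for two distinct deleted edges runs from an end of one to
   an end of the other, hence joins A to B. *)
Lemma shared_lone_crosser fa fb Sa Sb g : fa \in sys_edges C -> fb \in sys_edges C ->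
  fa != fb -> AB_edge fa -> AB_edge fb ->
  lone_crosser fa Sa g L -> lone_crosser fb Sb g L -> touches A g && touches B g.
Proof.
move=> faE fbE fab ABa ABb [_ ASa BSa onlyA pa] [_ _ _ _ pb].
have crg : crosses Sa g by have := mem_head g [::]; rewrite -onlyA mem_filter => /andP[].
case: g pa pb crg {onlyA} => [//|x s] /orP[ea|sa] /orP[eb|sb] crg.
- by case/eqP: fab; apply: ends_at_inj psC faE fbE ea eb.
- apply: (crosses_AB ASa BSa crg); first by rewrite (eqP sb) AB_edge_head.
  by rewrite (eqP ea) AB_edge_tail.
- apply: (crosses_AB ASa BSa crg); first by rewrite (eqP sa) AB_edge_head.
  by rewrite (eqP eb) AB_edge_tail.
- by case/eqP: fab; apply: starts_at_inj psC faE fbE sa sb.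
Qed.

(* The lone crossers of f1, f2 and f3 cannot all coincide: two of them would
   be pieces of the same kind, forcing two deleted edges to share a tail or
   a head. *)
Lemma lone_crossers_not_all_equal S1 S2 S3 g :
  lone_crosser f1 S1 g L -> lone_crosser f2 S2 g L -> lone_crosser f3 S3 g L -> False.
Proof.
move=> [_ _ _ _ p1] [_ _ _ _ p2] [_ _ _ _ p3].
have kinds fa fb : fa \in sys_edges C -> fb \in sys_edges C -> fa != fb ->
    ends_at fa.1 g || starts_at fa.2 g -> ends_at fb.1 g || starts_at fb.2 g ->
    ends_at fa.1 g != ends_at fb.1 g.
  move=> faE fbE fab /orP[ea|sa] /orP[eb|sb].
  - by case/eqP: fab; apply: ends_at_inj psC faE fbE ea eb.
  - by rewrite ea; apply: contra fab => eb; rewrite (ends_at_inj psC faE fbE ea eb).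
  - by rewrite eb eq_sym; apply: contra fab => ea; rewrite (ends_at_inj psC faE fbE ea eb).
  - by case/eqP: fab; apply: starts_at_inj psC faE fbE sa sb.
move: (kinds _ _ f1E f2E n12 p1 p2) (kinds _ _ f1E f3E n13 p1 p3) (kinds _ _ f2E f3E n23 p2 p3).
by do 3!case: (ends_at _ g).
Qed.

(* The lone crossers of f1, f2 and f3 cannot exist together: if two of them
   coincide, that path touches both A and B, and otherwise the three distinct
   paths, each touching A or B, include two touching the same block; either
   way lone_crossers_apart is contradicted. *)
Lemma no_three_lone_crossers S1 S2 S3 g1 g2 g3 : lone_crosser f1 S1 g1 L ->
  lone_crosser f2 S2 g2 L -> lone_crosser f3 S3 g3 L -> False.
Proof.
move=> w1 w2 w3; have t1 := lone_crosser_touches AB1 w1.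
have t2 := lone_crosser_touches AB2 w2; have t3 := lone_crosser_touches AB3 w3.
have apart fa fb Sa Sb ga gb : lone_crosser fa Sa ga L -> lone_crosser fb Sb gb L ->
    ga != gb -> touches A ga && touches B ga -> touches A gb || touches B gb -> False.
  move=> wa wb gab /andP[ta tb] tgb; apply: (lone_crossers_apart wa wb gab).
  by case/orP: tgb => ->; rewrite ?ta ?tb ?orbT.
have [e12|d12] := eqVneq g1 g2.
  move: w2; rewrite -e12 => w2; have both := shared_lone_crosser f1E f2E n12 AB1 AB2 w1 w2.
  have [e13|d13] := eqVneq g1 g3; last exact: apart w1 w3 d13 both t3.
  by move: w3; rewrite -e13 => w3; apply: lone_crossers_not_all_equal w1 w2 w3.
have [e13|d13] := eqVneq g1 g3.
  move: w3; rewrite -e13 => w3; have both := shared_lone_crosser f1E f3E n13 AB1 AB3 w1 w3.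
  exact: apart w1 w2 d12 both t2.
have [e23|d23] := eqVneq g2 g3.
  move: w3; rewrite -e23 => w3; have both := shared_lone_crosser f2E f3E n23 AB2 AB3 w2 w3.
  by apply: apart w2 w1 _ both t1; rewrite eq_sym.
case/orP: t1 => t1; case/orP: t2 => t2; case/orP: t3 => t3; first
  [ by apply: (lone_crossers_apart w1 w2 d12); rewrite t1 t2 ?orbT
  | by apply: (lone_crossers_apart w1 w3 d13); rewrite t1 t3 ?orbT
  | by apply: (lone_crossers_apart w2 w3 d23); rewrite t2 t3 ?orbT ].
Qed.

(* Main lemma: among three A-B edges, some two can be deleted keeping C
   connecting; otherwise each of the three would have a lone crosser. *)
Lemma two_of_three_removable :
  connecting P (cut [:: f2; f3] C) \/ connecting P (cut [:: f1; f3] C) \/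
  connecting P (cut [:: f1; f2] C).
Proof.
apply: NNPP => /not_or_and[nc1 /not_or_and[nc2 nc3]].
have toL F : F =i [:: f1; f2; f3] -> cut F C = L by move/eq_cut->.
have [S1 [g1 w1]] : exists S g, lone_crosser f1 S g L.
  rewrite -(toL [:: f2; f3; f1]); first exact: lone_crosser_exists.
  by move=> z; rewrite !inE; case: (z == f1); case: (z == f2); case: (z == f3).
have [S2 [g2 w2]] : exists S g, lone_crosser f2 S g L.
  rewrite -(toL [:: f1; f3; f2]); first by apply: lone_crosser_exists; rewrite // eq_sym.
  by move=> z; rewrite !inE; case: (z == f1); case: (z == f2); case: (z == f3).
have [S3 [g3 w3]] : exists S g, lone_crosser f3 S g L.
  by apply: lone_crosser_exists; rewrite // eq_sym.
exact: no_three_lone_crossers w1 w2 w3.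
Qed.

End ThreeEdges.

End TwoBlocks.

Section Reduction.
Variables (T : finType) (e : rel T) (P : {set {set T}}).
Hypothesis partP : partition P [set: T].
Implicit Types (C : seq (seq T)).

Definition reducible C : Prop :=
  exists F, connecting P (cut F C) /\ exists2 f, f \in sys_edges C & f \in F.

Lemma reducible_inner C : connecting P C -> has (inner P) (sys_edges C) -> reducible C.
Proof.
move=> conC /hasP[z zC innz]; exists [:: z]; split; last by exists z; rewrite ?inE.
by apply: cut_inner; rewrite //= innz.
Qed.

Lemma no_inner_edges C : ~~ has (inner P) (sys_edges C) ->
  forall A, A \in P -> forall p, p \in C ->
    all (fun xy : T * T => ~~ ((xy.1 \in A) && (xy.2 \in A))) (path_edges p).
Proof.
move=> /hasPn noinner A AP p pC; apply/allP => z zp.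
have zC : z \in sys_edges C by apply/flattenP; exists (path_edges p); rewrite // map_f.
apply: contra (noinner z zC) => /andP[z1 z2].
by rewrite /inner (def_pblock (trivIP partP) AP z1) (def_pblock (trivIP partP) AP z2).
Qed.

Lemma reducible_AB C A B : path_system e C -> connecting P C -> A \in P -> B \in P ->
  2 < n_edges_between C A B -> reducible C.
Proof.
move=> psC conC AP BP; rewrite n_edges_between_count -size_filter.
have : {subset [seq z <- sys_edges C | AB_edge A B z] <= sys_edges C}.
  by move=> z; rewrite mem_filter => /andP[].
have : all (AB_edge A B) [seq z <- sys_edges C | AB_edge A B z] by apply: filter_all.
have : uniq [seq z <- sys_edges C | AB_edge A B z] by rewrite filter_uniq // (uniq_sys_edges psC).
case: [seq z <- _ | _] => [|f1 [|f2 [|f3 r]]] //.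
rewrite /= !inE !negb_or => /and4P[/and3P[n12 n13 _] /andP[n23 _] _ _] /and4P[AB1 AB2 AB3 _] sub _.
have [f1E f2E f3E] : [/\ f1 \in sys_edges C, f2 \in sys_edges C & f3 \in sys_edges C].
  by split; apply: sub; rewrite !inE eqxx ?orbT.
have [c|[c|c]] := two_of_three_removable partP AP BP psC conC f1E f2E f3E AB1 AB2 AB3 n12 n13 n23.
- by exists [:: f2; f3]; split => //; exists f2; rewrite ?inE ?eqxx.
- by exists [:: f1; f3]; split => //; exists f1; rewrite ?inE ?eqxx.
- by exists [:: f1; f2]; split => //; exists f1; rewrite ?inE ?eqxx.
Qed.

Lemma reducible_or_done C : path_system e C -> connecting P C ->
  reducible C \/
  ((forall A, A \in P -> forall p, p \in C ->
      all (fun xy : T * T => ~~ ((xy.1 \in A) && (xy.2 \in A))) (path_edges p)) /\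
   (forall A B, A \in P -> B \in P -> A != B -> n_edges_between C A B <= 2)).
Proof.
move=> psC conC; have [innerC|noinner] := boolP (has (inner P) (sys_edges C)).
  by left; apply: reducible_inner.
have [many|few] := boolP [exists A, exists B, [&& A \in P, B \in P & 2 < n_edges_between C A B]].
  by case/existsP: many => A /existsP[B /and3P[AP BP manyAB]]; left; apply: reducible_AB manyAB.
right; split; first exact: no_inner_edges.
move=> A B AP BP _; rewrite leqNgt; apply: contra few => manyAB.
by apply/existsP; exists A; apply/existsP; exists B; rewrite AP BP.
Qed.

End Reduction.

Theorem mainTheorem13 (T : finType) (e : rel T)
  (e_sym : symmetric e) (e_irr : irreflexive e)
  (P : {set {set T}}) (hP : partition P [set: T])
  (C : seq (seq T)) (hC : path_system e C) (hCc : connecting P C) :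
  exists C' : seq (seq T),
    [/\ path_system e C', connecting P C',
        (forall A, A \in P -> forall p, p \in C' ->
           all (fun xy : T * T => ~~ ((xy.1 \in A) && (xy.2 \in A))) (path_edges p)) &
        (forall A B, A \in P -> B \in P -> A != B ->
           n_edges_between C' A B <= 2)].
Proof.
have [n] : exists n, size (sys_edges C) < n by exists (size (sys_edges C)).+1.
elim: n C hC hCc => // n IH C psC conC smallC.
have [[F [conF [f fC fF]]]|[noinner few]] := reducible_or_done hP psC conC.
  apply: IH (path_system_cut F psC) conF _.
  by apply: leq_trans (size_cut_lt fC fF) _; rewrite -ltnS.
by exists C.
Qed.
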